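(* Consider equation (E) and assume each $\tau_i$ is non-decreasing. Let $p>0$ be a constant with $p_i(t)\ge p$ for all $t\ge t_0$ and $i=1,\dots,m$. If $$p^{m}\limsup_{t\to+\infty}\prod_{i=1}^{m}\big(t-\tau_i(t)\big)>\frac{1}{m^{m}},$$ then all solutions of (E) oscillate.
   Context: Equation (E) is $x'(t)+\sum_{i=1}^{m}p_i(t)\,x(\tau_i(t))=0$, $t\ge t_0$, where $m\ge1$ is an integer and, for each $i$, $p_i,\tau_i:[t_0,\infty)\to[0,\infty)$ are continuous, $\tau_i(t)\le t$ for $t\ge t_0$, and $\lim_{t\to\infty}\tau_i(t)=\infty$. Let $\tau(t)=\min_i\tau_i(t)$ and $\tau_{(-1)}(t)=\sup\{s:\tau(s)\le t\}$. A solution of (E) is a function $x\in C([T_0,\infty);\mathbb{R})$ for some $T_0\ge t_0$ which is continuously differentiable on $[\tau_{(-1)}(T_0),\infty)$ and satisfies (E) for $t\ge\tau_{(-1)}(T_0)$. A solution is oscillatory if it has arbitrarily large zeros; ''all solutions oscillate'' means every solution is oscillatory. *)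

From Stdlib Require Export Reals Lra.
Open Scope R_scope.

(* Indices i = 1..m of the paper are encoded as i = 0..m-1 (nat). *)

Definition cont_on_from (a : R) (f : R -> R) : Prop :=
  forall t, a <= t -> forall eps, 0 < eps ->
    exists delta, 0 < delta /\
      forall s, a <= s -> Rabs (s - t) < delta -> Rabs (f s - f t) < eps.

Definition deriv_on_from (a : R) (f f' : R -> R) : Prop :=
  forall t, a <= t -> forall eps, 0 < eps ->
    exists delta, 0 < delta /\
      forall s, a <= s -> s <> t -> Rabs (s - t) < delta ->
        Rabs ((f s - f t) / (s - t) - f' t) < eps.

(* Sum_{i=1}^m g i, for m >= 1 (indices shifted to 0..m-1). *)
Definition sum_m (m : nat) (g : nat -> R) : R := sum_f_R0 g (pred m).
Definition prod_m (m : nat) (g : nat -> R) : R := prod_f_R0 g (pred m).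

Definition E_hyp (m : nat) (t0 : R) (p tau : nat -> R -> R) : Prop :=
  (1 <= m)%nat /\
  (forall i, (i < m)%nat ->
     cont_on_from t0 (p i) /\ cont_on_from t0 (tau i) /\
     (forall t, t0 <= t -> 0 <= p i t /\ 0 <= tau i t /\ tau i t <= t) /\
     (forall M, exists T, forall t, T <= t -> M <= tau i t)).

Fixpoint tau_min_aux (tau : nat -> R -> R) (k : nat) (t : R) : R :=
  match k with
  | O => tau O t
  | S k' => Rmin (tau_min_aux tau k' t) (tau k t)
  end.
Definition tau_min (m : nat) (tau : nat -> R -> R) (t : R) : R :=
  tau_min_aux tau (pred m) t.

(* T1 = tau_{(-1)}(T0) = sup { s >= t0 : tau(s) <= T0 } (domain of tau is [t0,oo)). *)
Definition tau_inv (m : nat) (t0 : R) (tau : nat -> R -> R) (T0 T1 : R) : Prop :=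
  is_lub (fun s => t0 <= s /\ tau_min m tau s <= T0) T1.

Definition is_solution (m : nat) (t0 : R) (p tau : nat -> R -> R)
    (T0 : R) (x : R -> R) : Prop :=
  t0 <= T0 /\ cont_on_from T0 x /\
  exists T1 x', tau_inv m t0 tau T0 T1 /\
    deriv_on_from T1 x x' /\ cont_on_from T1 x' /\
    forall t, T1 <= t ->
      x' t + sum_m m (fun i => p i t * x (tau i t)) = 0.

Definition oscillatory (x : R -> R) : Prop :=
  forall T, exists t, T <= t /\ x t = 0.

(* limsup_{t -> +oo} f t = L, with L : option R, None standing for +oo. *)
Definition limsup_infty (f : R -> R) (L : option R) : Prop :=
  match L with
  | Some l => forall eps, 0 < eps ->
      (exists T, forall t, T <= t -> f t < l + eps) /\
      (forall T, exists t, T <= t /\ l - eps < f t)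
  | None => forall M T, exists t, T <= t /\ M < f t
  end.

(* Suppose a solution x is not oscillatory.  Being continuous and without
   zeros on some [A, oo), it has constant sign there; since -x is again a
   solution we may assume x > 0 on [A, oo).  Then, once the delayed
   arguments tau_i(s) exceed A, the equation gives x' <= 0, so x is
   eventually non-increasing.  For large t, the mean value theorem on
   [tau_i(t), t] together with the monotonicity of x and of the tau_j yields
   the key estimate
       x(tau_i(t)) >= p * S(t) * (t - tau_i(t)),   S(t) = sum_j x(tau_j(t)).
   Multiplying over i and comparing with the AM-GM inequality
   prod_i x(tau_i(t)) <= (S(t)/m)^m gives p^m prod_i (t - tau_i(t)) <= 1/m^m
   for all large t, contradicting the limsup hypothesis, which makes this
   quantity exceed 1/m^m for arbitrarily large t. *)
From Stdlib Require Import Reals Lra Lia Classical.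
From mathcomp Require all_boot all_order all_algebra Rstruct.

Module AMGM.
Import all_boot all_order all_algebra Rstruct.
Import Order.TTheory GRing.Theory Num.Theory.

Lemma prod_f_R0E (y : nat -> R) n :
  prod_f_R0 y n = (\prod_(i < n.+1) y i)%R.
Proof.
elim: n => [|n IH]; first by rewrite big_ord_recr big_ord0 /= mul1r.
by rewrite /= IH [in RHS]big_ord_recr.
Qed.

Lemma sum_f_R0E (y : nat -> R) n :
  sum_f_R0 y n = (\sum_(i < n.+1) y i)%R.
Proof.
elim: n => [|n IH]; first by rewrite big_ord_recr big_ord0 /= add0r.
by rewrite /= IH [in RHS]big_ord_recr.
Qed.

Lemma amgm (n : nat) (y : nat -> R) :
  (forall i, (i <= n)%coq_nat -> Rle 0 (y i)) ->
  Rle (prod_f_R0 y n) (Rdiv (sum_f_R0 y n) (INR n.+1) ^ n.+1).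
Proof.
move=> y_ge0.
have agm := fun H => (@leif_AGM R 'I_n.+1 predT (fun i => y i) H).1.
rewrite card_ord /= in agm.
apply/RleP; rewrite prod_f_R0E sum_f_R0E RdivE INRE RpowE.
apply: agm => i _; apply/RleP; apply: y_ge0.
by apply/ssrnat.leP; rewrite -ltnS; exact: ltn_ord.
Qed.
End AMGM.

Open Scope R_scope.

Lemma prod_f_R0_scal (c : R) (f : nat -> R) N :
  prod_f_R0 (fun i => c * f i) N = c ^ S N * prod_f_R0 f N.
Proof. induction N as [|N IH]; simpl; [ring | rewrite IH; simpl; ring]. Qed.

Lemma sum_m_opp (m : nat) (a b : nat -> R) :
  sum_m m (fun i => a i * - b i) = - sum_m m (fun i => a i * b i).
Proof.
  unfold sum_m; induction (pred m) as [|N IH]; simpl; [ring | rewrite IH; ring].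
Qed.

(* If positive numbers y_i satisfy k * (sum_j y_j) * d_i <= y_i with d_i >= 0,
   then k^m prod_i d_i <= 1/m^m: multiply the bounds and apply AM-GM. *)
Lemma amgm_product_bound (m : nat) (k : R) (y d : nat -> R) :
  (1 <= m)%nat -> 0 <= k ->
  (forall i, (i < m)%nat -> 0 < y i) ->
  (forall i, (i < m)%nat -> 0 <= d i) ->
  (forall i, (i < m)%nat -> k * sum_m m y * d i <= y i) ->
  k ^ m * prod_m m d <= 1 / INR m ^ m.
Proof.
  intros Hm Hk Hy Hd Hbound.
  destruct m as [|N]; [lia|]; unfold sum_m, prod_m in *; simpl pred in *.
  set (total := sum_f_R0 y N) in *.
  assert (HS : 0 < total) by (apply tech1; intros; apply Hy; lia).
  assert (Hprod : (k * total) ^ S N * prod_f_R0 d N <= prod_f_R0 y N).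
  { rewrite <- prod_f_R0_scal. apply prod_SO_Rle. intros i Hi.
    assert (Hi' : (i < S N)%nat) by lia.
    pose proof (Hd i Hi'). split; [|exact (Hbound i Hi')].
    apply Rmult_le_pos; [apply Rmult_le_pos|]; lra. }
  pose proof (AMGM.amgm N y ltac:(intros i Hi; apply Rlt_le, Hy; lia)) as Hagm.
  fold total in Hagm.
  assert (HSn : 0 < total ^ S N) by (apply pow_lt; lra).
  assert (Hmn : 0 < INR (S N) ^ S N) by (apply pow_lt, lt_0_INR; lia).
  unfold Rdiv in Hagm |- *.
  rewrite Rpow_mult_distr, pow_inv in Hagm; rewrite Rpow_mult_distr in Hprod.
  apply (Rmult_le_reg_r (total ^ S N)); [exact HSn |].
  replace (k ^ S N * prod_f_R0 d N * total ^ S N)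
    with (k ^ S N * total ^ S N * prod_f_R0 d N) by ring.
  lra.
Qed.

Lemma positive_stays_positive (x : R -> R) (A : R) :
  (forall t, A <= t -> continuity_pt x t) ->
  (forall t, A <= t -> x t <> 0) ->
  0 < x A -> forall t, A <= t -> 0 < x t.
Proof.
  intros Hc Hnz HA t Ht.
  destruct (Rlt_or_le 0 (x t)) as [Hpos | Hle]; [exact Hpos | exfalso].
  assert (HAt : A < t) by (destruct (Req_dec A t) as [<- | ]; lra).
  assert (Hneg : 0 < - x t) by (pose proof (Hnz t Ht); lra).
  destruct (Ranalysis5.IVT_interv (fun s => - x s) A t) as [z [Hz Hxz]];
    [intros a Ha; apply continuity_pt_opp, Hc; lra | exact HAt | lra | exact Hneg |].
  apply (Hnz z); lra.
Qed.

Lemma one_signed (x : R -> R) (A : R) :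
  (forall t, A <= t -> continuity_pt x t) ->
  (forall t, A <= t -> x t <> 0) ->
  (forall t, A <= t -> 0 < x t) \/ (forall t, A <= t -> x t < 0).
Proof.
  intros Hc Hnz.
  destruct (Rlt_or_le 0 (x A)) as [HA | HA];
    [left; exact (positive_stays_positive x A Hc Hnz HA) | right].
  assert (HA' : 0 < - x A) by (pose proof (Hnz A (Rle_refl A)); lra).
  intros t Ht.
  enough (0 < - x t) by lra.
  apply (positive_stays_positive (fun s => - x s) A); [| | exact HA' | exact Ht].
  - intros s Hs; apply continuity_pt_opp, Hc, Hs.
  - intros s Hs; pose proof (Hnz s Hs); lra.
Qed.

Definition frequently (P : R -> Prop) : Prop :=
  forall T, exists t, T <= t /\ P t.

Lemma below_limsup_frequently (f : R -> R) (L : option R) (c : R) :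
  limsup_infty f L ->
  match L with None => True | Some l => c < l end ->
  frequently (fun t => c < f t).
Proof.
  intros HL Hc T; destruct L as [l |].
  - destruct (HL ((l - c) / 2) ltac:(lra)) as [_ Hfreq].
    destruct (Hfreq T) as [t [Ht Hft]]; exists t; split; [exact Ht | lra].
  - exact (HL c T).
Qed.

Lemma scaled_limsup_frequently (f : R -> R) (L : option R) (k c : R) :
  0 < k -> limsup_infty f L ->
  match L with None => True | Some l => k * l > c end ->
  frequently (fun t => c < k * f t).
Proof.
  intros Hk HL Hc.
  assert (Hc' : match L with None => True | Some l => c / k < l end).
  { destruct L as [l |]; [| exact I].
    apply (Rmult_lt_reg_l k); [exact Hk |].
    replace (k * (c / k)) with c by (field; lra); lra. }
  intros T; destruct (below_limsup_frequently f L (c / k) HL Hc' T) as [t [Ht Hft]].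
  exists t; split; [exact Ht |].
  apply (Rmult_lt_compat_l k) in Hft; [| exact Hk].
  replace (k * (c / k)) with c in Hft by (field; lra); exact Hft.
Qed.

Definition delays_beyond (m : nat) (tau : nat -> R -> R) (B M : R) : Prop :=
  forall i s, (i < m)%nat -> B <= s -> M <= tau i s.

Lemma delays_eventually_beyond (m : nat) (tau : nat -> R -> R) :
  (forall i, (i < m)%nat -> forall M, exists T, forall t, T <= t -> M <= tau i t) ->
  forall M, exists B, M <= B /\ delays_beyond m tau B M.
Proof.
  intros H M; induction m as [| m IH].
  - exists M; split; [lra | intros i s Hi; lia].
  - destruct IH as [B1 [HB1 H1]]; [intros i Hi; apply H; lia |].
    destruct (H m (Nat.lt_succ_diag_r m) M) as [B2 H2].
    exists (Rmax B1 B2); split; [pose proof (Rmax_l B1 B2); lra |].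
    intros i s Hi Hs; pose proof (Rmax_l B1 B2); pose proof (Rmax_r B1 B2).
    destruct (Nat.eq_dec i m) as [-> | Hne]; [apply H2; lra | apply H1; [lia | lra]].
Qed.

Lemma deriv_on_from_interior (a : R) (f f' : R -> R) :
  deriv_on_from a f f' -> forall t, a < t -> derivable_pt_lim f t (f' t).
Proof.
  intros D t Ht eps Heps.
  destruct (D t (Rlt_le _ _ Ht) eps Heps) as [d [Hd Hs]].
  assert (Hpos : 0 < Rmin d (t - a)) by (apply Rmin_pos; lra).
  exists (mkposreal _ Hpos); intros h Hh0 Hh; simpl in Hh.
  pose proof (Rmin_l d (t - a)); pose proof (Rmin_r d (t - a)).
  pose proof (Rabs_def2 _ _ Hh).
  replace h with ((t + h) - t) at 2 by ring.
  apply Hs; [lra | lra | replace (t + h - t) with h by ring; lra].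
Qed.

Lemma tau_min_le_first (tau : nat -> R -> R) k s : tau_min_aux tau k s <= tau 0%nat s.
Proof.
  induction k as [| k IH]; simpl; [lra |].
  pose proof (Rmin_l (tau_min_aux tau k s) (tau (S k) s)); lra.
Qed.

(* A solution satisfies (E), in the classical sense, on an interval (T1, oo)
   with T1 >= t0: indeed T1 = tau_{(-1)}(T0) >= T0 since tau(T0) <= T0. *)
Lemma solution_on_interval (m : nat) (t0 : R) (p tau : nat -> R -> R) (T0 : R) (x : R -> R) :
  E_hyp m t0 p tau -> is_solution m t0 p tau T0 x ->
  exists T1 x', t0 <= T1 /\
    (forall t, T1 < t -> derivable_pt_lim x t (x' t)) /\
    (forall t, T1 < t -> x' t + sum_m m (fun i => p i t * x (tau i t)) = 0).
Proof.
  intros [Hm Hi] [HT0 [_ [T1 [x' [Hlub [Hd [_ Heq]]]]]]].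
  exists T1, x'; split; [| split].
  - enough (T0 <= T1) by lra.
    apply (proj1 Hlub); split; [exact HT0 |].
    destruct (Hi 0%nat ltac:(lia)) as [_ [_ [Htau _]]].
    pose proof (tau_min_le_first tau (pred m) T0).
    pose proof (proj2 (proj2 (Htau T0 HT0))).
    unfold tau_min; lra.
  - exact (deriv_on_from_interior T1 x x' Hd).
  - intros t Ht; apply Heq; lra.
Qed.

Section PositiveSolution.

Variables (m : nat) (t0 pc T1 A : R) (p tau : nat -> R -> R) (x x' : R -> R).
Hypothesis m_pos : (1 <= m)%nat.
Hypothesis tau_le : forall i, (i < m)%nat -> forall t, t0 <= t -> tau i t <= t.
Hypothesis tau_mono :
  forall i, (i < m)%nat -> forall s t, t0 <= s -> s <= t -> tau i s <= tau i t.
Hypothesis tau_large : forall M, exists B, M <= B /\ delays_beyond m tau B M.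
Hypothesis pc_pos : 0 < pc.
Hypothesis p_ge : forall i, (i < m)%nat -> forall t, t0 <= t -> pc <= p i t.
Hypothesis t0_le_T1 : t0 <= T1.
Hypothesis T1_lt_A : T1 < A.
Hypothesis x_deriv : forall t, T1 < t -> derivable_pt_lim x t (x' t).
Hypothesis x_eq : forall t, T1 < t -> x' t + sum_m m (fun i => p i t * x (tau i t)) = 0.
Hypothesis x_pos : forall t, A <= t -> 0 < x t.

(* Once the delayed arguments exceed A, every term of the sum is positive. *)
Lemma deriv_nonpos (B : R) :
  A <= B -> delays_beyond m tau B A -> forall s, B <= s -> x' s <= 0.
Proof.
  intros HAB HB s Hs.
  assert (Hsum : 0 < sum_m m (fun i => p i s * x (tau i s))).
  { apply tech1; intros i Hi.
    assert (Hi' : (i < m)%nat) by lia.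
    pose proof (p_ge i Hi' s ltac:(lra)); pose proof (x_pos _ (HB i s Hi' Hs)).
    apply Rmult_lt_0_compat; lra. }
  pose proof (x_eq s ltac:(lra)); lra.
Qed.

Lemma nonincreasing (B : R) :
  A <= B -> delays_beyond m tau B A -> forall a b, B <= a -> a <= b -> x b <= x a.
Proof.
  intros HAB HB a b Ha Hab.
  destruct (Req_dec a b) as [<- | Hne]; [lra |].
  destruct (MVT_cor2 x x' a b ltac:(lra)) as [c [Hc Hac]];
    [intros c Hc; apply x_deriv; lra |].
  pose proof (deriv_nonpos B HAB HB c ltac:(lra)); nra.
Qed.

(* By the mean
   value theorem x(tau_i(t)) - x(t) = -x'(c) (t - tau_i(t)) for some
   c in (tau_i(t), t), and -x'(c) = sum_j p_j(c) x(tau_j(c)) >= pc * S(t)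
   because tau_j(c) <= tau_j(t) and x is non-increasing. *)
Lemma key_estimate (B C t : R) :
  A <= B -> delays_beyond m tau B A -> A <= C -> delays_beyond m tau C B ->
  A <= t -> (forall j, (j < m)%nat -> C <= tau j t) ->
  forall i, (i < m)%nat ->
    pc * sum_m m (fun j => x (tau j t)) * (t - tau i t) <= x (tau i t).
Proof.
  intros HAB HB HAC HC HAt Htau i Hi.
  pose proof (tau_le i Hi t ltac:(lra)) as Hit.
  pose proof (Htau i Hi) as HCi.
  destruct (Req_dec (tau i t) t) as [Heq | Hne].
  { rewrite Heq, Rminus_diag, Rmult_0_r; apply Rlt_le, x_pos; lra. }
  destruct (MVT_cor2 x x' (tau i t) t ltac:(lra)) as [c [Hmvt Hc]];
    [intros c Hc; apply x_deriv; lra |].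
  assert (Hsum : pc * sum_m m (fun j => x (tau j t))
                 <= sum_m m (fun j => p j c * x (tau j c))).
  { unfold sum_m; rewrite scal_sum; apply sum_Rle; intros j Hj.
    assert (Hj' : (j < m)%nat) by lia.
    pose proof (p_ge j Hj' c ltac:(lra)).
    pose proof (x_pos _ (Rle_trans _ _ _ HAC (Htau j Hj'))).
    pose proof (HC j c Hj' ltac:(lra)).
    pose proof (tau_mono j Hj' c t ltac:(lra) ltac:(lra)).
    pose proof (nonincreasing B HAB HB (tau j c) (tau j t) ltac:(lra) ltac:(lra)).
    nra. }
  pose proof (x_eq c ltac:(lra)); pose proof (x_pos t HAt).
  assert (Hx' : x' c <= - (pc * sum_m m (fun j => x (tau j t)))) by lra.
  nra.
Qed.

Lemma no_positive_solution :
  frequently (fun t => 1 / INR m ^ m < pc ^ m * prod_m m (fun i => t - tau i t)) ->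
  False.
Proof.
  intros Hfreq.
  destruct (tau_large A) as [B [HAB HB]].
  destruct (tau_large B) as [C [HBC HC]].
  destruct (tau_large C) as [D [HCD HD]].
  destruct (Hfreq D) as [t [Ht Hbig]].
  assert (Htau : forall j, (j < m)%nat -> C <= tau j t) by (intros j Hj; apply HD; [exact Hj | lra]).
  assert (Hbound : pc ^ m * prod_m m (fun i => t - tau i t) <= 1 / INR m ^ m).
  { apply (amgm_product_bound m pc (fun j => x (tau j t))); [exact m_pos | lra | | |].
    - intros j Hj; apply x_pos; pose proof (Htau j Hj); lra.
    - intros j Hj; pose proof (tau_le j Hj t ltac:(lra)); lra.
    - apply (key_estimate B C t); lra || assumption. }
  lra.
Qed.

End PositiveSolution.

Theorem corollary3p5 (m : nat) (t0 : R) (p tau : nat -> R -> R) (pc : R) :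
  E_hyp m t0 p tau ->
  (forall i, (i < m)%nat -> forall s t, t0 <= s -> s <= t -> tau i s <= tau i t) ->
  0 < pc ->
  (forall i, (i < m)%nat -> forall t, t0 <= t -> pc <= p i t) ->
  (exists L, limsup_infty (fun t => prod_m m (fun i => t - tau i t)) L /\
     match L with
     | None => True
     | Some l => pc ^ m * l > 1 / (INR m ^ m)
     end) ->
  forall T0 x, is_solution m t0 p tau T0 x -> oscillatory x.
Proof.
  intros Hyp Hmono Hpc Hp [L [HL HLc]] T0 x Hsol.
  destruct (solution_on_interval m t0 p tau T0 x Hyp Hsol) as [T1 [x' [HT1 [Hd Heq]]]].
  destruct Hyp as [Hm Hi].
  assert (Htau : forall i, (i < m)%nat -> forall t, t0 <= t -> tau i t <= t)
    by (intros i Hi' t Ht; apply (Hi i Hi'), Ht).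
  pose proof (delays_eventually_beyond m tau (fun i Hi' => proj2 (proj2 (proj2 (Hi i Hi')))))
    as Hlarge.
  pose proof (scaled_limsup_frequently _ L (pc ^ m) (1 / INR m ^ m)
                (pow_lt pc m Hpc) HL HLc) as Hfreq.
  intros T; apply NNPP; intros Hno.
  destruct (Rmax_l T (T1 + 1), Rmax_r T (T1 + 1)) as [HTA HT1A].
  set (A := Rmax T (T1 + 1)) in *; clearbody A.
  destruct (one_signed x A) as [Hpos | Hneg].
  - intros t Ht; apply derivable_continuous_pt; exists (x' t); apply Hd; lra.
  - intros t Ht Hx; apply Hno; exists t; split; [lra | exact Hx].
  - exact (no_positive_solution m t0 pc T1 A p tau x x' Hm Htau Hmono Hlarge Hpc Hp HT1
             ltac:(lra) Hd ltac:(intros t Ht; apply Heq, Ht) Hpos Hfreq).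
  - apply (no_positive_solution m t0 pc T1 A p tau (fun s => - x s) (fun s => - x' s)
             Hm Htau Hmono Hlarge Hpc Hp HT1 ltac:(lra)); [| | | exact Hfreq].
    + intros t Ht; apply (derivable_pt_lim_opp x), Hd, Ht.
    + intros t Ht; cbv beta; rewrite sum_m_opp.
      pose proof (Heq t Ht); lra.
    + intros t Ht; pose proof (Hneg t Ht); lra.
Qed.
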